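(* Let $A(l_1,l_2)\in\mathbb{C}[l_1,l_2]$ be a polynomial of degree at most $R$ in each of $l_1$ and $l_2$, and assume that $T_{l_1,l_2}A(l_1,l_2)$ has total degree at most $R$ (i.e. is a linear combination of monomials $l_1^ml_2^{m'}$ with $m+m'\le R$). Then $$\sum_{l_1=k_1}^{k_2}\sum_{l_2=k_2}^{k_3}A(l_1,l_2)-A(k_2,k_2)$$ is a polynomial in $k_1,k_2,k_3$ of degree at most $R+2$ in $k_2$. Moreover, if $T_{l_1,l_2}A(l_1,l_2)=0$, then this polynomial has degree at most $R+1$ in $k_2$.
   Context: Summation over an interval is extended to all integer endpoints: $\sum_{i=a}^b f(i)=f(a)+\cdots+f(b)$ if $a\le b$, $=0$ if $b=a-1$, and $=-f(b+1)-\cdots-f(a-1)$ if $b+1\le a-1$; with this convention sums of polynomials over intervals with polynomial endpoints are polynomials. $E_x$ denotes the shift $E_xf(x)=f(x+1)$, $E_x^{-1}$ its inverse, $\Delta_x=E_x-\operatorname{id}$, and $S_{x,y}$ the swap $S_{x,y}f(x,y)=f(y,x)$; products of operators are compositions. Define $V_{x,y}=\operatorname{id}+E_x^{-1}\Delta_x\Delta_y$ and $$T_{l_1,l_2}=(\operatorname{id}+E_{l_2}E_{l_1}^{-1}S_{l_1,l_2})\,(V_{l_1,l_2}+V_{l_2,l_1})^{-1}V_{l_1,l_2},$$ where $V_{l_1,l_2}+V_{l_2,l_1}=2\operatorname{id}+(E_{l_1}^{-1}+E_{l_2}^{-1})\Delta_{l_1}\Delta_{l_2}$ is invertible on $\mathbb{C}[l_1,l_2]$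 (its inverse is the finite-on-each-polynomial series $\tfrac12\sum_{j\ge0}(-\tfrac12)^j((E_{l_1}^{-1}+E_{l_2}^{-1})\Delta_{l_1}\Delta_{l_2})^j$). *)

From HB Require Import structures.
From mathcomp Require Import all_boot all_order all_algebra.
From mathcomp Require Import reals.
From mathcomp Require Import mpoly.
From mathcomp.real_closed Require Import complex.

Set Implicit Arguments.
Unset Strict Implicit.
Unset Printing Implicit Defensive.

Import Order.TTheory GRing.Theory Num.Theory.
Local Open Scope ring_scope.

Section Ops.
(* C is the field of complex numbers R[i] for a real type R (any realType is
   isomorphic to the reals). *)
Variable R : realType.
Local Notation C := (R[i]).
Local Notation P2 := {mpoly C[2]}.

Definition v1 : 'I_2 := ord0.
Definition v2 : 'I_2 := ord_max.
Definition L1 : P2 := 'X_v1.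
Definition L2 : P2 := 'X_v2.

Definition E1 (p : P2) : P2 := p \mPo [tuple L1 + 1; L2].
Definition E1inv (p : P2) : P2 := p \mPo [tuple L1 - 1; L2].
Definition E2 (p : P2) : P2 := p \mPo [tuple L1; L2 + 1].
Definition E2inv (p : P2) : P2 := p \mPo [tuple L1; L2 - 1].
Definition S12 (p : P2) : P2 := p \mPo [tuple L2; L1].

Definition D1 (p : P2) : P2 := E1 p - p.
Definition D2 (p : P2) : P2 := E2 p - p.

Definition V12 (p : P2) : P2 := p + E1inv (D1 (D2 p)).
Definition V21 (p : P2) : P2 := p + E2inv (D2 (D1 p)).

(* W = (E_{l1}^{-1} + E_{l2}^{-1}) Delta_{l1} Delta_{l2}; V12 + V21 = 2 id + W *)
Definition W (p : P2) : P2 := let q := D1 (D2 p) in E1inv q + E2inv q.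

(* (V12 + V21)^{-1} p = 1/2 sum_{j>=0} (-1/2)^j W^j p.  W strictly lowers the
   total degree, so W^j p = 0 as soon as j >= msize p (= total degree + 1);
   the series is therefore the finite sum below. *)
Definition Vinv (p : P2) : P2 :=
  \sum_(j < msize p) ((2%:R)^-1 * (- (2%:R)^-1) ^+ j) *: iter j W p.

Definition Top (p : P2) : P2 :=
  let q := Vinv (V12 p) in q + E2 (E1inv (S12 q)).

End Ops.

(* Extended interval summation over integers:
   sum_{i=a}^b f i = f a + ... + f b if a <= b, 0 if b = a - 1,
   and - f (b+1) - ... - f (a-1) if b + 1 <= a - 1. *)
Definition isum (V : zmodType) (a b : int) (f : int -> V) : V :=
  if (a <= b)%R then \sum_(i < absz (b - a + 1)%R) f (a + i%:Z)
  else - \sum_(i < absz (a - b - 1)%R) f (b + 1 + i%:Z).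

Definition degvar_le (C : nzRingType) (n : nat) (p : {mpoly C[n]}) (i : 'I_n) (d : nat) :=
  forall m, m \in msupp p -> (m i <= d)%N.

Definition totdeg_le (C : nzRingType) (n : nat) (p : {mpoly C[n]}) (d : nat) :=
  forall m, m \in msupp p -> (mdeg m <= d)%N.

Definition ev2 (C : comNzRingType) (p : {mpoly C[2]}) (x y : C) : C :=
  p.@[tnth [tuple x; y]].
Definition ev3 (C : comNzRingType) (p : {mpoly C[3]}) (x y z : C) : C :=
  p.@[tnth [tuple x; y; z]].

From HB Require Import structures.
From mathcomp Require Import all_boot all_order all_algebra.
From mathcomp Require Import reals.
From mathcomp Require Import mpoly.
From mathcomp.real_closed Require Import complex.
From mathcomp Require Import ring zify.

(* Let F be the double antidifference of A built from Faulhaber polynomials: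
   Δ_{l1}Δ_{l2} F = A, F vanishes on both axes, and F has degree at most R+1 in
   each variable. The double sum telescopes to
   F(k2+1,k3+1) - F(k2+1,k2) - F(k1,k3+1) + F(k1,k2), where only F(k2+1,k2) may
   have degree above R+1 in k2; together with -A(k2,k2) it gives -c_F(k2), with
   the corner c_f(k) = f(k,k) + f(k+1,k+1) - f(k,k+1).
   Since W lowers degrees it is nilpotent, so V12 + V21 = 2 + W is invertible
   and T is well defined. For U = (V12 + V21)^{-1} V12 F one computes
   c_{TF}(k) = ((V12 + V21) U)(k+1,k) = (V12 F)(k+1,k) = c_F(k), and T commutes
   with Δ_{l1}Δ_{l2}. Hence TF and the double antidifference B of TA have the
   same mixed difference, so on the integer grid
   TF(a,b) = B(a,b) + TF(a,0) + TF(0,b) - TF(0,0) and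
   c_F(k) = c_B(k) + TF(k+1,0) + TF(0,k) - TF(0,0). Finally B has total degree
   at most R+2 (and B = 0 if TA = 0), while TF, like F, has degree at most R+1
   in each variable. *)

Set Implicit Arguments.
Unset Strict Implicit.
Unset Printing Implicit Defensive.

Import Order.TTheory GRing.Theory Num.Theory.
Local Open Scope ring_scope.

(** * Weighted degrees *)

Section WeightedDegree.
Variables (K : comNzRingType) (n : nat) (w : 'I_n -> nat).
Implicit Types (p q : {mpoly K[n]}) (m : 'X_{1..n}).

Definition mweight m : nat := (\sum_i w i * m i)%N.
Definition wdeg_le p d := forall m, m \in msupp p -> (mweight m <= d)%N.

Lemma mweight0 : mweight 0%MM = 0%N.
Proof. by rewrite /mweight big1 // => i _; rewrite mnm0E muln0. Qed.

Lemma mweightD m1 m2 : mweight (m1 + m2)%MM = (mweight m1 + mweight m2)%N.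
Proof. by rewrite /mweight -big_split; apply: eq_bigr => i _; rewrite mnmDE mulnDr. Qed.

Lemma mweightU i : mweight U_(i)%MM = w i.
Proof.
rewrite /mweight (bigD1 i) //= mnm1E eqxx muln1 big1 ?addn0 // => j /negbTE.
by rewrite mnm1E eq_sym => ->; rewrite muln0.
Qed.

Lemma wdeg_le_leq p d d' : (d <= d')%N -> wdeg_le p d -> wdeg_le p d'.
Proof. by move=> le_dd' hp m /hp /leq_trans; apply. Qed.

Lemma wdeg_le0 d : wdeg_le 0 d.
Proof. by move=> m; rewrite msupp0. Qed.

Lemma wdeg_leC c d : wdeg_le c%:MP d.
Proof.
move=> m; rewrite msuppC; case: (c == 0) => //.
by rewrite inE => /eqP ->; rewrite mweight0.
Qed.

Lemma wdeg_le1 d : wdeg_le 1 d.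
Proof. by rewrite -mpolyC1; apply: wdeg_leC. Qed.

Lemma wdeg_leD p q d : wdeg_le p d -> wdeg_le q d -> wdeg_le (p + q) d.
Proof. by move=> hp hq m /msuppD_le; rewrite mem_cat => /orP [/hp|/hq]. Qed.

Lemma wdeg_leN p d : wdeg_le p d -> wdeg_le (- p) d.
Proof. by move=> hp m; rewrite (perm_mem (msuppN p)) => /hp. Qed.

Lemma wdeg_leB p q d : wdeg_le p d -> wdeg_le q d -> wdeg_le (p - q) d.
Proof. by move=> hp hq; apply: wdeg_leD => //; apply: wdeg_leN. Qed.

Lemma wdeg_leZ c p d : wdeg_le p d -> wdeg_le (c *: p) d.
Proof. by move=> hp m /msuppZ_le /hp. Qed.

Lemma wdeg_le_sum (I : Type) (r : seq I) (P : pred I) (F : I -> {mpoly K[n]}) d :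
  (forall i, P i -> wdeg_le (F i) d) -> wdeg_le (\sum_(i <- r | P i) F i) d.
Proof.
move=> hF; elim/big_ind: _ => //; first exact: wdeg_le0.
by move=> x y; apply: wdeg_leD.
Qed.

Lemma wdeg_leM p q a b : wdeg_le p a -> wdeg_le q b -> wdeg_le (p * q) (a + b).
Proof.
move=> hp hq m /msuppM_le /allpairsP [[m1 m2] /= [h1 h2 ->]].
by rewrite mweightD leq_add // ?hp ?hq.
Qed.

Lemma wdeg_leX p a k : wdeg_le p a -> wdeg_le (p ^+ k) (a * k).
Proof.
move=> hp; elim: k => [|k ih]; first by rewrite expr0 muln0; apply: wdeg_leC.
by rewrite exprS mulnS; apply: wdeg_leM.
Qed.

Lemma wdeg_leXU i : wdeg_le 'X_i (w i).
Proof. by move=> m; rewrite msuppX inE => /eqP ->; rewrite mweightU. Qed.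

Lemma wdeg_le_prod (I : finType) (F : I -> {mpoly K[n]}) (b : I -> nat) :
  (forall i, wdeg_le (F i) (b i)) -> wdeg_le (\prod_i F i) (\sum_i b i).
Proof.
move=> hF; elim/big_rec2: _ => [|i x y _ hy]; [exact: wdeg_leC | exact: wdeg_leM].
Qed.

End WeightedDegree.

Lemma wdeg_le_comp (K : comNzRingType) (n k : nat) (w : 'I_n -> nat) (e : 'I_k -> nat)
    (p : {mpoly K[k]}) (lq : k.-tuple {mpoly K[n]}) d :
  (forall j, wdeg_le w (tnth lq j) (e j)) -> wdeg_le e p d -> wdeg_le w (p \mPo lq) d.
Proof.
move=> hlq hp; rewrite comp_mpolyEX big_seq; apply: wdeg_le_sum => m /hp hm.
apply: wdeg_leZ; rewrite comp_mpolyX; apply: (wdeg_le_leq hm).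
by apply: wdeg_le_prod => i; apply: wdeg_leX.
Qed.

Definition wvar n (i : 'I_n) (j : 'I_n) : nat := j == i.

Lemma mweight_wvar n (i : 'I_n) m : mweight (wvar i) m = m i.
Proof.
rewrite /mweight (bigD1 i) //= /wvar eqxx mul1n big1 ?addn0 // => j /negbTE.
by move=> ->; rewrite mul0n.
Qed.

Lemma degvar_wdeg (K : comNzRingType) n (p : {mpoly K[n]}) i d :
  degvar_le p i d <-> wdeg_le (wvar i) p d.
Proof. by split=> hp m /hp; rewrite mweight_wvar. Qed.

Definition w2 (a b : nat) (j : 'I_2) : nat := if j == v1 then a else b.

Lemma mweight2 a b (m : 'X_{1..2}) : mweight (w2 a b) m = (a * m v1 + b * m v2)%N.
Proof.
rewrite /mweight !big_ord_recr big_ord0 /=.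
by have -> : widen_ord (leqnSn 1) ord_max = v1 by apply: val_inj.
Qed.

Lemma wdeg_le_w2_00 (K : comNzRingType) (p : {mpoly K[2]}) : wdeg_le (w2 0 0) p 0.
Proof. by move=> m _; rewrite mweight2. Qed.

Lemma totdeg_wdeg (K : comNzRingType) (p : {mpoly K[2]}) d :
  totdeg_le p d <-> wdeg_le (w2 1 1) p d.
Proof.
have mdeg2 m : mdeg m = mweight (w2 1 1) m.
  by rewrite mdegE; apply: eq_bigr => i _; rewrite /w2; case: eqP; rewrite mul1n.
by split=> hp m /hp; rewrite mdeg2.
Qed.

Lemma wdeg_le_comp2 (K : comNzRingType) n (w : 'I_n -> nat) (p : {mpoly K[2]})
    (a b : {mpoly K[n]}) ea eb d :
  wdeg_le w a ea -> wdeg_le w b eb -> wdeg_le (w2 ea eb) p d ->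
  wdeg_le w (p \mPo [tuple a; b]) d.
Proof.
by move=> ha hb; apply: wdeg_le_comp => -[[|[|//]] ?]; rewrite (tnth_nth 0).
Qed.

Section Bidegree.
Variable K : comNzRingType.
Implicit Types (p q a b : {mpoly K[2]}).

Definition bideg_le p dx dy := wdeg_le (w2 1 0) p dx /\ wdeg_le (w2 0 1) p dy.

Lemma bideg_le_degvar p dx dy : degvar_le p v1 dx -> degvar_le p v2 dy -> bideg_le p dx dy.
Proof.
move=> hx hy; split=> m hm; rewrite mweight2 mul1n mul0n ?addn0 ?add0n.
  exact: hx.
exact: hy.
Qed.

Lemma bideg_le1 dx dy : bideg_le 1 dx dy.
Proof. by split; apply: wdeg_le1. Qed.

Lemma bideg_leX1 : bideg_le 'X_v1 1 0.
Proof. by split; apply: wdeg_leXU. Qed.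

Lemma bideg_leX2 : bideg_le 'X_v2 0 1.
Proof. by split; apply: wdeg_leXU. Qed.

Lemma bideg_leD p q dx dy : bideg_le p dx dy -> bideg_le q dx dy -> bideg_le (p + q) dx dy.
Proof. by move=> [? ?] [? ?]; split; apply: wdeg_leD. Qed.

Lemma bideg_leB p q dx dy : bideg_le p dx dy -> bideg_le q dx dy -> bideg_le (p - q) dx dy.
Proof. by move=> [? ?] [? ?]; split; apply: wdeg_leB. Qed.

Lemma bideg_le_sum (I : Type) (r : seq I) (P : pred I) (F : I -> {mpoly K[2]}) dx dy :
  (forall i, P i -> bideg_le (F i) dx dy) -> bideg_le (\sum_(i <- r | P i) (F i)) dx dy.
Proof. by move=> hF; split; apply: wdeg_le_sum => i /hF []. Qed.

Lemma bideg_leZ c p dx dy : bideg_le p dx dy -> bideg_le (c *: p) dx dy.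
Proof. by move=> [? ?]; split; apply: wdeg_leZ. Qed.

Lemma bideg_le_comp p a b dx dy : bideg_le p dx dy -> bideg_le a 1 0 -> bideg_le b 0 1 ->
  bideg_le (p \mPo [tuple a; b]) dx dy.
Proof.
move=> [px py] [ax ay] [bx b_y].
by split; [apply: wdeg_le_comp2 ax bx px | apply: wdeg_le_comp2 ay b_y py].
Qed.

Lemma bideg_le_comp_swap p a b dx dy : bideg_le p dx dy -> bideg_le a 0 1 -> bideg_le b 1 0 ->
  bideg_le (p \mPo [tuple a; b]) dy dx.
Proof.
move=> [px py] [ax ay] [bx b_y].
by split; [apply: wdeg_le_comp2 ax bx py | apply: wdeg_le_comp2 ay b_y px].
Qed.

End Bidegree.

Section Evaluation.
Variable K : comNzRingType.
Implicit Types (p q : {mpoly K[2]}) (x y : K).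

Lemma meval_comp2 n p (a b : {mpoly K[n]}) v :
  (p \mPo [tuple a; b]).@[v] = ev2 p a.@[v] b.@[v].
Proof.
by rewrite /ev2 comp_mpoly_meval; apply: meval_eq => -[[|[|//]] ?]; rewrite !(tnth_nth 0).
Qed.

Lemma ev2_comp2 p a b x y : ev2 (p \mPo [tuple a; b]) x y = ev2 p (ev2 a x y) (ev2 b x y).
Proof. exact: meval_comp2. Qed.

Lemma ev2E p x y : ev2 p x y = \sum_(m <- msupp p) p@_m * (x ^+ m v1 * y ^+ m v2).
Proof.
rewrite /ev2 mevalE; apply: eq_bigr => m _; congr (_ * _).
rewrite !big_ord_recr big_ord0 /= !(tnth_nth 0) /= mul1r.
by have -> : widen_ord (leqnSn 1) ord_max = v1 by apply: val_inj.
Qed.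

Lemma ev2X1 x y : ev2 'X_v1 x y = x. Proof. by rewrite /ev2 mevalXU (tnth_nth 0). Qed.
Lemma ev2X2 x y : ev2 'X_v2 x y = y. Proof. by rewrite /ev2 mevalXU (tnth_nth 0). Qed.
Lemma ev21 x y : ev2 1 x y = 1. Proof. exact: meval1. Qed.
Lemma ev2D p q x y : ev2 (p + q) x y = ev2 p x y + ev2 q x y. Proof. exact: mevalD. Qed.
Lemma ev2B p q x y : ev2 (p - q) x y = ev2 p x y - ev2 q x y. Proof. exact: mevalB. Qed.
Lemma ev2Z c p x y : ev2 (c *: p) x y = c * ev2 p x y. Proof. exact: mevalZ. Qed.
Lemma ev2M p q x y : ev2 (p * q) x y = ev2 p x y * ev2 q x y. Proof. exact: mevalM. Qed.

Lemma ev2_sum (I : Type) (r : seq I) (P : pred I) (F : I -> {mpoly K[2]}) x y :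
  ev2 (\sum_(i <- r | P i) F i) x y = \sum_(i <- r | P i) ev2 (F i) x y.
Proof. exact: raddf_sum. Qed.

End Evaluation.

Section IntervalSums.
Variable V : zmodType.

Lemma sum_telescope_int (F : int -> V) (a : int) n :
  \sum_(i < n) (F (a + i%:Z + 1) - F (a + i%:Z)) = F (a + n%:Z) - F a.
Proof.
elim: n => [|n ih]; first by rewrite big_ord0 addr0 subrr.
rewrite big_ord_recr /= ih (_ : a + n.+1%:Z = a + n%:Z + 1); last by lia.
by rewrite addrC addrA subrK.
Qed.

Lemma isum_telescope (F f : int -> V) (a b : int) :
  (forall z, F (z + 1) - F z = f z) -> isum a b f = F (b + 1) - F a.
Proof.
move=> hF; rewrite /isum; case: ifP => le_ab.
  under eq_bigr => i _ do rewrite -hF.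
  rewrite sum_telescope_int.
  by congr (F _ - _); lia.
under eq_bigr => i _ do rewrite -hF.
rewrite sum_telescope_int opprB.
by congr (_ - F _); lia.
Qed.

Lemma isum_const0 (a b : int) : isum a b (fun=> 0 : V) = 0.
Proof. by rewrite /isum; case: ifP => _; rewrite big1 ?oppr0. Qed.

End IntervalSums.

(** * Mixed differences of functions of two variables *)

Section MixedDifference.
Variable K : comNzRingType.
Implicit Types (f g : K -> K -> K) (x y : K).

(* Pointwise counterparts of Δ_{l1}Δ_{l2}, W, V_{l1,l2}, V_{l1,l2} + V_{l2,l1}
   and id + E_{l2} E_{l1}^{-1} S_{l1,l2}. *)
Definition diff12 f x y := f (x + 1) (y + 1) - f (x + 1) y - f x (y + 1) + f x y.
Definition Wfun f x y := diff12 f (x - 1) y + diff12 f x (y - 1).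
Definition V12fun f x y := f x y + diff12 f (x - 1) y.
Definition Vsumfun f x y := 2 * f x y + Wfun f x y.
Definition sym_shift f x y := f x y + f (y + 1) (x - 1).
Definition corner f x := f x x + f (x + 1) (x + 1) - f x (x + 1).

Lemma diff12_ext f g x y : (forall a b, f a b = g a b) -> diff12 f x y = diff12 g x y.
Proof. by move=> efg; rewrite /diff12 !efg. Qed.

Lemma Wfun_ext f g x y : (forall a b, f a b = g a b) -> Wfun f x y = Wfun g x y.
Proof. by move=> efg; rewrite /Wfun /diff12 !efg. Qed.

Lemma corner_ext f g x : (forall a b, f a b = g a b) -> corner f x = corner g x.
Proof. by move=> efg; rewrite /corner !efg. Qed.

Lemma Vsumfun_ext f g x y : (forall a b, f a b = g a b) -> Vsumfun f x y = Vsumfun g x y.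
Proof. by move=> efg; rewrite /Vsumfun (Wfun_ext _ _ efg) efg. Qed.

Lemma Wfun_sum n (F : nat -> K -> K -> K) x y :
  Wfun (fun a b => \sum_(j < n) F j a b) x y = \sum_(j < n) Wfun (F j) x y.
Proof. by rewrite /Wfun /diff12 !big_split !sumrN. Qed.

Lemma WfunZ c f x y : Wfun (fun a b => c * f a b) x y = c * Wfun f x y.
Proof. by rewrite /Wfun /diff12; ring. Qed.

Lemma diff12_Vsumfun_kernel f g Q QA :
  (forall x y, diff12 f x y = g x y) ->
  (forall x y, Vsumfun Q x y = V12fun f x y) -> (forall x y, Vsumfun QA x y = V12fun g x y) ->
  forall x y, Vsumfun (fun a b => diff12 Q a b - QA a b) x y = 0.
Proof.
move=> hfg hQ hQA x y.
transitivity (diff12 (Vsumfun Q) x y - Vsumfun QA x y).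
  by rewrite /Vsumfun /Wfun /diff12 !addrK !subrK; ring.
rewrite (diff12_ext _ _ hQ) hQA /V12fun /diff12 -!hfg /diff12 !addrK !subrK; ring.
Qed.

Lemma diff12_sym_shift f x y : diff12 (sym_shift f) x y = sym_shift (diff12 f) x y.
Proof. by rewrite /sym_shift /diff12 !addrK !subrK; ring. Qed.

Lemma corner_sym_shift f x : corner (sym_shift f) x = Vsumfun f (x + 1) x.
Proof. by rewrite /corner /sym_shift /Vsumfun /Wfun /diff12 !addrK !subrK; ring. Qed.

Lemma V12fun_corner f x : V12fun f (x + 1) x = corner f x.
Proof. by rewrite /V12fun /corner /diff12 addrK; ring. Qed.

Lemma corner_diff12 f x : f (x + 1) x + diff12 f x x = corner f x.
Proof. by rewrite /corner /diff12; ring. Qed.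

Lemma intrD1 (z : int) : (z + 1)%:~R = z%:~R + 1 :> K.
Proof. by rewrite intrD. Qed.

Lemma isum2_diff12 f g (a b c d : int) : (forall x y, diff12 f x y = g x y) ->
  isum a b (fun l1 => isum c d (fun l2 => g l1%:~R l2%:~R)) =
  f (b + 1)%:~R (d + 1)%:~R - f (b + 1)%:~R c%:~R - f a%:~R (d + 1)%:~R + f a%:~R c%:~R.
Proof.
move=> hfg.
have inner (l : int) : isum c d (fun l2 => g l%:~R l2%:~R) =
    f (l + 1)%:~R (d + 1)%:~R - f l%:~R (d + 1)%:~R - (f (l + 1)%:~R c%:~R - f l%:~R c%:~R).
  apply: (isum_telescope (F := fun z : int => f (l + 1)%:~R z%:~R - f l%:~R z%:~R)) => z.
  rewrite -hfg /diff12 !intrD1; ring.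
rewrite (isum_telescope (F := fun l : int => f l%:~R (d + 1)%:~R - f l%:~R c%:~R)).
  by ring.
by move=> l; rewrite inner; ring.
Qed.

Lemma diff12_eq0_grid f : (forall x y, diff12 f x y = 0) ->
  forall a b : int, f a%:~R b%:~R = f a%:~R 0 + f 0 b%:~R - f 0 0.
Proof.
move=> hf a b; have := isum2_diff12 0 (a - 1) 0 (b - 1) hf.
rewrite !isum_const0 !subrK mulr0z => /esym e.
by apply/subr0_eq; rewrite -[RHS]e; ring.
Qed.

Lemma corner_grid f g : (forall x y, diff12 f x y = diff12 g x y) ->
  (forall x, g x 0 = 0) -> (forall y, g 0 y = 0) ->
  forall k : int, corner f k%:~R = corner g k%:~R + f (k%:~R + 1) 0 + f 0 k%:~R - f 0 0.
Proof.
move=> hfg gx0 g0y k.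
have hdiff x y : diff12 (fun a b => f a b - g a b) x y = 0.
  transitivity (diff12 f x y - diff12 g x y); first by rewrite /diff12; ring.
  by rewrite hfg subrr.
have grid (a b : int) : f a%:~R b%:~R = g a%:~R b%:~R + f a%:~R 0 + f 0 b%:~R - f 0 0.
  have /= := diff12_eq0_grid hdiff a b; rewrite !gx0 !g0y.
  by move/(canRL (subrK _)) => ->; ring.
rewrite /corner -!intrD1 !grid !intrD1; ring.
Qed.

Lemma isum2_corner f g t b (k1 k2 k3 : int) :
  (forall x y, diff12 f x y = g x y) -> (forall x, corner t x = corner f x) ->
  (forall x y, diff12 t x y = diff12 b x y) -> (forall x, b x 0 = 0) -> (forall y, b 0 y = 0) ->
  isum k1 k2 (fun l1 => isum k2 k3 (fun l2 => g l1%:~R l2%:~R)) - g k2%:~R k2%:~R =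
  f (k2%:~R + 1) (k3%:~R + 1) - f k1%:~R (k3%:~R + 1) + f k1%:~R k2%:~R
  - (corner b k2%:~R + t (k2%:~R + 1) 0 + t 0 k2%:~R - t 0 0).
Proof.
move=> hfg htf htb bx0 b0y.
rewrite (isum2_diff12 _ _ _ _ hfg) -(corner_grid htb bx0 b0y) htf -corner_diff12 hfg !intrD1.
by ring.
Qed.

End MixedDifference.

(** * Nilpotency of W *)

Section HorizontalSlices.
Variable K : idomainType.
Implicit Types (f g : K -> K -> K) (n : nat).

Definition xpoly_le n f :=
  forall y, exists2 q : {poly K}, (size q <= n)%N & forall x, f x y = q.[x].

Lemma xpoly_le_ext n f g : (forall x y, f x y = g x y) -> xpoly_le n f -> xpoly_le n g.
Proof. by move=> efg hf y; have [q hq ef] := hf y; exists q => // x; rewrite -efg. Qed.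

Lemma xpoly_leB n f g : xpoly_le n f -> xpoly_le n g -> xpoly_le n (fun x y => f x y - g x y).
Proof.
move=> hf hg y; have [q hq ef] := hf y; have [r hr eg] := hg y.
exists (q - r) => [|x]; last by rewrite hornerD hornerN ef eg.
by rewrite (leq_trans (size_polyD _ _)) // size_polyN geq_max hq hr.
Qed.

Lemma xpoly_leD n f g : xpoly_le n f -> xpoly_le n g -> xpoly_le n (fun x y => f x y + g x y).
Proof.
move=> hf hg y; have [q hq ef] := hf y; have [r hr eg] := hg y.
exists (q + r) => [|x]; last by rewrite hornerD ef eg.
by rewrite (leq_trans (size_polyD _ _)) // geq_max hq hr.
Qed.

Lemma xpoly_le_shifty n c f : xpoly_le n f -> xpoly_le n (fun x y => f x (y + c)).
Proof. by move=> hf y; apply: hf. Qed.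

Lemma xpoly_le_shiftx n c f : xpoly_le n f -> xpoly_le n (fun x y => f (x + c) y).
Proof.
move=> hf y; have [q hq ef] := hf y; exists (q \Po ('X + c%:P)) => [|x].
  by rewrite size_comp_poly2 ?size_XaddC.
by rewrite horner_comp hornerD hornerX hornerC ef.
Qed.

Lemma size_diff_poly (q : {poly K}) : (size (q \Po ('X + 1%:P) - q)%R <= (size q).-1)%N.
Proof.
have [->|q_neq0] := eqVneq q 0; first by rewrite comp_poly0 subr0 size_poly0.
have size_shift : size (q \Po ('X + 1%:P)) = size q.
  by rewrite size_comp_poly2 ?size_XaddC.
apply/leq_sizeP => j; rewrite coefB leq_eqVlt => /orP [/eqP <-|lt_j].
  have := lead_coef_comp q (q := 'X + 1%:P); rewrite size_XaddC => /(_ isT).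
  by rewrite lead_coefXaddC expr1n mulr1 lead_coefE size_shift => ->; rewrite subrr.
by rewrite !nth_default ?subrr // ?size_shift (polySpred q_neq0).
Qed.

Lemma xpoly_le_diffx n f : xpoly_le n f -> xpoly_le n.-1 (fun x y => f (x + 1) y - f x y).
Proof.
move=> hf y; have [q hq ef] := hf y; exists (q \Po ('X + 1%:P) - q) => [|x].
  by rewrite (leq_trans (size_diff_poly q)) // -!subn1 leq_sub2r.
by rewrite hornerD hornerN horner_comp hornerD hornerX hornerC !ef.
Qed.

Lemma xpoly_le_diff12 n f : xpoly_le n f -> xpoly_le n.-1 (diff12 f).
Proof.
move=> hf; have hy : xpoly_le n (fun x y => f x (y + 1) - f x y).
  by apply: xpoly_leB => //; apply: xpoly_le_shifty.
by apply: xpoly_le_ext (xpoly_le_diffx hy) => x y; rewrite /diff12; ring.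
Qed.

Lemma xpoly_le_Wfun n f : xpoly_le n f -> xpoly_le n.-1 (Wfun f).
Proof.
move=> /xpoly_le_diff12 hd.
by apply: xpoly_leD; [apply: (xpoly_le_shiftx (-1) hd) | apply: (xpoly_le_shifty (-1) hd)].
Qed.

Lemma xpoly_le0 f : xpoly_le 0 f -> forall x y, f x y = 0.
Proof.
move=> hf x y; have [q] := hf y; rewrite size_poly_leq0 => /eqP -> ->.
by rewrite horner0.
Qed.

Lemma xpoly_le_ev2 (p : {mpoly K[2]}) : xpoly_le (msize p) (ev2 p).
Proof.
move=> y; exists (\sum_(m <- msupp p) (p@_m * y ^+ m v2) *: 'X^(m v1)) => [|x].
  rewrite (leq_trans (size_sum _ _ _)) //; apply/bigmax_leqP_seq => m hm _.
  rewrite (leq_trans (size_scale_leq _ _)) // size_polyXn.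
  by rewrite (leq_ltn_trans _ (msize_mdeg_lt hm)) // mdegE (bigD1 v1) //= leq_addr.
rewrite ev2E horner_sum; apply: eq_bigr => m _.
by rewrite hornerZ hornerXn; ring.
Qed.

End HorizontalSlices.

(** * Double antidifferences *)

Section Faulhaber.
Variable K : numFieldType.

(* From (x + 1)^(i+1) - x^(i+1) = \sum_(j <= i) 'C(i+1, j) x^j. *)
Definition faulhaber_step i (s : seq {poly K}) : {poly K} :=
  (i.+1)%:R^-1 *: ('X^(i.+1) - \sum_(j < i) 'C(i.+1, j)%:R *: s`_j).

Fixpoint faulhaber_seq n : seq {poly K} :=
  if n is n'.+1 then rcons (faulhaber_seq n') (faulhaber_step n' (faulhaber_seq n')) else [::].

Definition faulhaber i := faulhaber_step i (faulhaber_seq i).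

Lemma faulhaberE i :
  faulhaber i = (i.+1)%:R^-1 *: ('X^(i.+1) - \sum_(j < i) 'C(i.+1, j)%:R *: faulhaber j).
Proof.
have nth_seq n j : (j < n)%N -> (faulhaber_seq n)`_j = faulhaber j.
  have size_seq m : size (faulhaber_seq m) = m by elim: m => //= m ih; rewrite size_rcons ih.
  elim: n => // n ih; rewrite ltnS leq_eqVlt => /orP [/eqP ->|lt_jn] /=.
    by rewrite nth_rcons size_seq ltnn eqxx.
  by rewrite nth_rcons size_seq lt_jn ih.
by rewrite /faulhaber /faulhaber_step; under eq_bigr => j _ do rewrite nth_seq //.
Qed.

Lemma horner_faulhaber i x : (faulhaber i).[x] =
  (i.+1)%:R^-1 * (x ^+ i.+1 - \sum_(j < i) 'C(i.+1, j)%:R * (faulhaber j).[x]).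
Proof.
rewrite faulhaberE hornerZ hornerD hornerN hornerXn horner_sum.
by under eq_bigr => j _ do rewrite hornerZ.
Qed.

Lemma faulhaber_diff i x : (faulhaber i).[x + 1] - (faulhaber i).[x] = x ^+ i.
Proof.
elim/ltn_ind: i => i ih; rewrite !horner_faulhaber -mulrBr.
have binomial : (x + 1) ^+ i.+1 =
    \sum_(j < i) 'C(i.+1, j)%:R * x ^+ j + (i.+1)%:R * x ^+ i + x ^+ i.+1.
  rewrite exprD1n !big_ord_recr /= binn binSn mulr1n -mulr_natl.
  by congr (_ + _ + _); apply: eq_bigr => j _; rewrite mulr_natl.
have lower : \sum_(j < i) 'C(i.+1, j)%:R * (faulhaber j).[x + 1] -
    \sum_(j < i) 'C(i.+1, j)%:R * (faulhaber j).[x] = \sum_(j < i) 'C(i.+1, j)%:R * x ^+ j.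
  by rewrite -sumrB; apply: eq_bigr => j _; rewrite -mulrBr ih.
have i1_neq0 : ((i.+1)%:R : K) != 0 by rewrite pnatr_eq0.
rewrite (_ : _ - _ - _ = (i.+1)%:R * x ^+ i); first by rewrite mulKf.
by rewrite binomial -lower; ring.
Qed.

Lemma horner0_faulhaber i : (faulhaber i).[0] = 0.
Proof.
elim/ltn_ind: i => i ih; rewrite horner_faulhaber expr0n big1 ?subrr ?mulr0 //.
by move=> j _; rewrite ih // mulr0.
Qed.

Lemma size_faulhaber i : ((size (faulhaber i)).-1 <= i.+1)%N.
Proof.
suff : (size (faulhaber i) <= i.+2)%N by case: size.
elim/ltn_ind: i => i ih; rewrite faulhaberE (leq_trans (size_scale_leq _ _)) //.
rewrite (leq_trans (size_polyD _ _)) // geq_max size_polyXn leqnn /=.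
rewrite size_polyN (leq_trans (size_sum _ _ _)) //; apply/bigmax_leqP => j _.
by rewrite (leq_trans (size_scale_leq _ _)) // (leq_trans (ih j (ltn_ord j))) // !ltnS ltnW.
Qed.

Definition poly_mvar n (v : 'I_n) (q : {poly K}) : {mpoly K[n]} :=
  \sum_(j < size q) q`_j *: 'X_v ^+ j.

Lemma meval_poly_mvar n (u : 'I_n -> K) v q : (poly_mvar v q).@[u] = q.[u v].
Proof.
rewrite /poly_mvar raddf_sum horner_coef; apply: eq_bigr => j _.
by rewrite /= mevalZ rmorphXn /= mevalXU.
Qed.

Lemma wdeg_le_poly_mvar n (w : 'I_n -> nat) v q : wdeg_le w (poly_mvar v q) ((size q).-1 * w v).
Proof.
apply: wdeg_le_sum => j _; apply: wdeg_leZ.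
apply: (wdeg_le_leq _ (wdeg_leX (k := j) (wdeg_leXU w (i := v)))).
by rewrite mulnC leq_mul2r -ltnS prednK ?ltn_ord ?orbT // (leq_ltn_trans _ (ltn_ord j)).
Qed.

Definition antidiff2 (p : {mpoly K[2]}) : {mpoly K[2]} :=
  \sum_(m <- msupp p) p@_m *: (poly_mvar v1 (faulhaber (m v1)) * poly_mvar v2 (faulhaber (m v2))).

Lemma ev2_antidiff2 p x y : ev2 (antidiff2 p) x y =
  \sum_(m <- msupp p) p@_m * ((faulhaber (m v1)).[x] * (faulhaber (m v2)).[y]).
Proof.
rewrite /antidiff2 ev2_sum; apply: eq_bigr => m _.
by rewrite ev2Z ev2M /ev2 !meval_poly_mvar !(tnth_nth 0).
Qed.

Lemma diff12_antidiff2 p x y : diff12 (ev2 (antidiff2 p)) x y = ev2 p x y.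
Proof.
rewrite /diff12 !ev2_antidiff2 -!sumrB -big_split ev2E /=; apply: eq_bigr => m _.
by rewrite -(faulhaber_diff (m v1) x) -(faulhaber_diff (m v2) y); ring.
Qed.

Lemma antidiff2_x0 p x : ev2 (antidiff2 p) x 0 = 0.
Proof. by rewrite ev2_antidiff2 big1 // => m _; rewrite horner0_faulhaber !mulr0. Qed.

Lemma antidiff2_0y p y : ev2 (antidiff2 p) 0 y = 0.
Proof. by rewrite ev2_antidiff2 big1 // => m _; rewrite horner0_faulhaber mul0r mulr0. Qed.

Lemma antidiff20 : antidiff2 0 = 0.
Proof. by rewrite /antidiff2 msupp0 big_nil. Qed.

Lemma wdeg_le_antidiff2 a b p d :
  wdeg_le (w2 a b) p d -> wdeg_le (w2 a b) (antidiff2 p) (d + a + b).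
Proof.
move=> hp; rewrite /antidiff2 big_seq; apply: wdeg_le_sum => m /hp.
rewrite mweight2 => hm; apply: wdeg_leZ.
have := wdeg_leM (wdeg_le_poly_mvar (w2 a b) (v := v1) (q := faulhaber (m v1)))
  (wdeg_le_poly_mvar (w2 a b) (v := v2) (q := faulhaber (m v2))).
apply: wdeg_le_leq; rewrite /w2 /=.
apply: leq_trans (leq_add (leq_mul (size_faulhaber _) (leqnn a))
  (leq_mul (size_faulhaber _) (leqnn b))) _.
by rewrite !mulSn; lia.
Qed.

End Faulhaber.

(** * The operator T *)

Section OperatorEvaluation.
Variable R : realType.
Local Notation C := R[i].
Local Notation P2 := {mpoly C[2]}.
Implicit Types (p r X A : P2) (x y : C).

Lemma ev2L1 x y : ev2 (L1 R) x y = x. Proof. exact: ev2X1. Qed.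
Lemma ev2L2 x y : ev2 (L2 R) x y = y. Proof. exact: ev2X2. Qed.

Lemma ev2E1 p x y : ev2 (E1 p) x y = ev2 p (x + 1) y.
Proof. by rewrite /E1 ev2_comp2 ev2D ev2L1 ev2L2 ev21. Qed.

Lemma ev2E1inv p x y : ev2 (E1inv p) x y = ev2 p (x - 1) y.
Proof. by rewrite /E1inv ev2_comp2 ev2B ev2L1 ev2L2 ev21. Qed.

Lemma ev2E2 p x y : ev2 (E2 p) x y = ev2 p x (y + 1).
Proof. by rewrite /E2 ev2_comp2 ev2D ev2L1 ev2L2 ev21. Qed.

Lemma ev2E2inv p x y : ev2 (E2inv p) x y = ev2 p x (y - 1).
Proof. by rewrite /E2inv ev2_comp2 ev2B ev2L1 ev2L2 ev21. Qed.

Lemma ev2S12 p x y : ev2 (S12 p) x y = ev2 p y x.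
Proof. by rewrite /S12 ev2_comp2 ev2L1 ev2L2. Qed.

Lemma ev2D12 p x y : ev2 (D1 (D2 p)) x y = diff12 (ev2 p) x y.
Proof. by rewrite /D1 ev2B ev2E1 /D2 !ev2B !ev2E2 /diff12; move: (ev2 p) => f; ring. Qed.

Lemma ev2W p x y : ev2 (W p) x y = Wfun (ev2 p) x y.
Proof.
(* [congr] keeps the two summands apart: rewriting in their sum would make
   ssreflect compare E1inv _ and E2inv _ by conversion, unfolding [comp_mpoly]. *)
rewrite /W /= ev2D /Wfun; congr (_ + _).
  by rewrite ev2E1inv ev2D12.
by rewrite ev2E2inv ev2D12.
Qed.

Lemma ev2V12 p x y : ev2 (V12 p) x y = V12fun (ev2 p) x y.
Proof. by rewrite /V12 ev2D ev2E1inv ev2D12. Qed.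

Lemma ev2Top p x y : ev2 (Top p) x y = sym_shift (ev2 (Vinv (V12 p))) x y.
Proof.
rewrite /Top /= ev2D /sym_shift; congr (_ + _).
by rewrite ev2E2 ev2E1inv ev2S12.
Qed.

End OperatorEvaluation.

Section InverseOfVsum.
Variable R : realType.
Local Notation C := R[i].
Local Notation P2 := {mpoly C[2]}.
Implicit Types (p r X A : P2) (x y : C).

Lemma ev2_iterW_eq0 p j x y : (msize p <= j)%N -> ev2 (iter j (@W R) p) x y = 0.
Proof.
have slices k : xpoly_le (msize p - k) (ev2 (iter k (@W R) p)).
  elim: k => [|k ih]; first by rewrite subn0; apply: xpoly_le_ev2.
  by rewrite subnS; apply: xpoly_le_ext (xpoly_le_Wfun ih) => a b; rewrite iterS ev2W.
by rewrite -subn_eq0 => /eqP p_le_j; apply: xpoly_le0; have := slices j; rewrite p_le_j.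
Qed.

Lemma Vsumfun_Vinv p x y : Vsumfun (ev2 (Vinv p)) x y = ev2 p x y.
Proof.
set N := msize p; set t : C := - 2%:R^-1.
pose g j := ev2 (iter j (@W R) p).
have ev2_Vinv a b : ev2 (Vinv p) a b = \sum_(j < N) 2%:R^-1 * t ^+ j * g j a b.
  by rewrite /Vinv ev2_sum; apply: eq_bigr => j _; rewrite ev2Z.
rewrite /Vsumfun (Wfun_ext _ _ ev2_Vinv) (Wfun_sum _ (fun j a b => 2%:R^-1 * t ^+ j * g j a b)).
rewrite ev2_Vinv mulr_sumr -big_split /=.
have two_neq0 : (2%:R : C) != 0 by rewrite pnatr_eq0.
under eq_bigr => j _.
  rewrite WfunZ -ev2W -iterS -/(g j.+1).
  have -> : 2 * (2%:R^-1 * t ^+ j * g j x y) + 2%:R^-1 * t ^+ j * g j.+1 x y =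
      - (t ^+ j.+1 * g j.+1 x y - t ^+ j * g j x y) by rewrite exprS /t; field.
  over.
rewrite sumrN -(big_mkord xpredT (fun j => t ^+ j.+1 * g j.+1 x y - t ^+ j * g j x y)).
by rewrite telescope_sumr // /g ev2_iterW_eq0 // mulr0 expr0 mul1r sub0r opprK.
Qed.

Lemma Vsumfun_eq0 z : (forall x y, Vsumfun (ev2 z) x y = 0) -> forall x y, ev2 z x y = 0.
Proof.
move=> hz.
have iterW j a b : ev2 (iter j (@W R) z) a b = (- 2) ^+ j * ev2 z a b.
  elim: j a b => [|j ih] a b; first by rewrite expr0 mul1r.
  rewrite iterS ev2W (Wfun_ext _ _ ih) WfunZ.
  move/eqP: (hz a b); rewrite /Vsumfun addrC addr_eq0 => /eqP ->.
  by rewrite exprS; move: (ev2 z a b) => e; ring.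
move=> x y; have := iterW (msize z) x y; rewrite ev2_iterW_eq0 // => /esym/eqP.
by rewrite mulf_eq0 expf_eq0 oppr_eq0 pnatr_eq0 andbF => /eqP.
Qed.

Lemma corner_Top p x : corner (ev2 (Top p)) x = corner (ev2 p) x.
Proof.
rewrite (corner_ext _ (ev2Top p)) corner_sym_shift Vsumfun_Vinv.
by rewrite ev2V12 V12fun_corner.
Qed.

Lemma ev2_D12B p r x y : ev2 (D1 (D2 p) - r) x y = diff12 (ev2 p) x y - ev2 r x y.
Proof. by rewrite ev2B ev2D12. Qed.

Lemma diff12_Vinv_V12 X A : (forall x y, diff12 (ev2 X) x y = ev2 A x y) ->
  forall x y, diff12 (ev2 (Vinv (V12 X))) x y = ev2 (Vinv (V12 A)) x y.
Proof.
move=> hXA x y; apply/subr0_eq; rewrite -ev2_D12B.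
apply: Vsumfun_eq0 => a b; rewrite (Vsumfun_ext _ _ (ev2_D12B _ _)).
apply: (diff12_Vsumfun_kernel hXA) => c d; by rewrite Vsumfun_Vinv ev2V12.
Qed.

Lemma diff12_Top X A : (forall x y, diff12 (ev2 X) x y = ev2 A x y) ->
  forall x y, diff12 (ev2 (Top X)) x y = ev2 (Top A) x y.
Proof.
move=> hXA x y; rewrite (diff12_ext _ _ (ev2Top X)) diff12_sym_shift ev2Top.
by rewrite /sym_shift !(diff12_Vinv_V12 hXA).
Qed.

End InverseOfVsum.

Section OperatorDegrees.
Variable R : realType.
Local Notation C := R[i].
Local Notation P2 := {mpoly C[2]}.
Implicit Types (p r X A : P2) (x y : C).

Lemma bideg_le_L1 : bideg_le (L1 R) 1 0. Proof. exact: bideg_leX1. Qed.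
Lemma bideg_le_L2 : bideg_le (L2 R) 0 1. Proof. exact: bideg_leX2. Qed.

Lemma bideg_le_E1 p dx dy : bideg_le p dx dy -> bideg_le (E1 p) dx dy.
Proof.
move/bideg_le_comp; apply; first exact: (bideg_leD bideg_le_L1 (bideg_le1 _ _ _)).
exact: bideg_le_L2.
Qed.

Lemma bideg_le_E1inv p dx dy : bideg_le p dx dy -> bideg_le (E1inv p) dx dy.
Proof.
move/bideg_le_comp; apply; first exact: (bideg_leB bideg_le_L1 (bideg_le1 _ _ _)).
exact: bideg_le_L2.
Qed.

Lemma bideg_le_E2 p dx dy : bideg_le p dx dy -> bideg_le (E2 p) dx dy.
Proof.
move/bideg_le_comp; apply; first exact: bideg_le_L1.
exact: (bideg_leD bideg_le_L2 (bideg_le1 _ _ _)).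
Qed.

Lemma bideg_le_E2inv p dx dy : bideg_le p dx dy -> bideg_le (E2inv p) dx dy.
Proof.
move/bideg_le_comp; apply; first exact: bideg_le_L1.
exact: (bideg_leB bideg_le_L2 (bideg_le1 _ _ _)).
Qed.

Lemma bideg_le_S12 p dx dy : bideg_le p dx dy -> bideg_le (S12 p) dy dx.
Proof. by move/bideg_le_comp_swap; apply; [exact: bideg_le_L2 | exact: bideg_le_L1]. Qed.

Lemma bideg_le_D12 p dx dy : bideg_le p dx dy -> bideg_le (D1 (D2 p)) dx dy.
Proof.
move=> hp; have hD2 : bideg_le (D2 p) dx dy by apply: bideg_leB (bideg_le_E2 hp) hp.
exact: bideg_leB (bideg_le_E1 hD2) hD2.
Qed.

Lemma bideg_le_W p dx dy : bideg_le p dx dy -> bideg_le (W p) dx dy.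
Proof. by move/bideg_le_D12 => hD; exact: bideg_leD (bideg_le_E1inv hD) (bideg_le_E2inv hD). Qed.

Lemma bideg_le_Vinv p dx dy : bideg_le p dx dy -> bideg_le (Vinv p) dx dy.
Proof.
move=> hp; apply: bideg_le_sum => j _; apply: bideg_leZ.
by elim: (val j) => //= k; apply: bideg_le_W.
Qed.

Lemma bideg_le_Top p d : bideg_le p d d -> bideg_le (Top p) d d.
Proof.
move=> hp; have hq : bideg_le (Vinv (V12 p)) d d.
  by apply/bideg_le_Vinv/(bideg_leD hp)/bideg_le_E1inv/bideg_le_D12.
exact: bideg_leD hq (bideg_le_E2 (bideg_le_E1inv (bideg_le_S12 hq))).
Qed.

End OperatorDegrees.

(** * The double sum *)

Section DoubleSumPolynomial.
Variable K : comNzRingType.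
Local Notation P2 := {mpoly K[2]}.
Local Notation P3 := {mpoly K[3]}.
Implicit Types (F T B : P2).

Definition k2v : 'I_3 := inord 1.
Definition K1 : P3 := 'X_ord0.
Definition K2 : P3 := 'X_k2v.
Definition K3 : P3 := 'X_ord_max.

Definition corner_poly B : P3 :=
  (B \mPo [tuple K2; K2]) + (B \mPo [tuple K2 + 1; K2 + 1]) - (B \mPo [tuple K2; K2 + 1]).

Definition double_sum_poly F T B : P3 :=
  (F \mPo [tuple K2 + 1; K3 + 1]) - (F \mPo [tuple K1; K3 + 1]) + (F \mPo [tuple K1; K2])
  - (corner_poly B + (T \mPo [tuple K2 + 1; 0]) + (T \mPo [tuple 0; K2]) - (T \mPo [tuple 0; 0])).

Lemma ev3_double_sum_poly F T B x y z :
  ev3 (double_sum_poly F T B) x y z =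
  ev2 F (y + 1) (z + 1) - ev2 F x (z + 1) + ev2 F x y
  - (corner (ev2 B) y + ev2 T (y + 1) 0 + ev2 T 0 y - ev2 T 0 0).
Proof.
rewrite /ev3 /double_sum_poly /corner_poly /corner.
by rewrite !(mevalD, mevalN, meval_comp2, meval0, meval1, mevalXU) !(tnth_nth 0) /= inordK.
Qed.

Lemma degvar_double_sum_poly F T B d e :
  bideg_le F d d -> bideg_le T d d -> wdeg_le (w2 1 1) B e ->
  degvar_le (double_sum_poly F T B) k2v (maxn e d).
Proof.
move=> [Fx Fy] [Tx Ty] hB; apply/degvar_wdeg.
have wK (i : 'I_3) : wdeg_le (wvar k2v) ('X_i : P3) (val i == 1).
  by have := wdeg_leXU (wvar k2v) (i := i); rewrite /wvar -val_eqE /= inordK.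
have wK1 : wdeg_le (wvar k2v) K1 0 by apply: wK.
have wK3 : wdeg_le (wvar k2v) K3 0 by apply: wK.
have wK2 : wdeg_le (wvar k2v) K2 1 by have := wK k2v; rewrite /= inordK.
have wK21 : wdeg_le (wvar k2v) (K2 + 1) 1 by apply: wdeg_leD wK2 (wdeg_le1 _ _).
have wK31 : wdeg_le (wvar k2v) (K3 + 1) 0 by apply: wdeg_leD wK3 (wdeg_le1 _ _).
have w0 : wdeg_le (wvar k2v) (0 : P3) 0 by apply: wdeg_le0.
have le_de : (d <= maxn e d)%N by rewrite leq_maxr.
have le_ee : (e <= maxn e d)%N by rewrite leq_maxl.
have h00 (p : P2) : wdeg_le (w2 0 0) p (maxn e d).
  exact: (wdeg_le_leq (leq0n _) (wdeg_le_w2_00 (p := p))).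
repeat apply: wdeg_leD || apply: wdeg_leB || apply: wdeg_leN.
- exact: (wdeg_le_comp2 wK21 wK31 (wdeg_le_leq le_de Fx)).
- exact: (wdeg_le_comp2 wK1 wK31 (h00 F)).
- exact: (wdeg_le_comp2 wK1 wK2 (wdeg_le_leq le_de Fy)).
- exact: (wdeg_le_comp2 wK2 wK2 (wdeg_le_leq le_ee hB)).
- exact: (wdeg_le_comp2 wK21 wK21 (wdeg_le_leq le_ee hB)).
- exact: (wdeg_le_comp2 wK2 wK21 (wdeg_le_leq le_ee hB)).
- exact: (wdeg_le_comp2 wK21 w0 (wdeg_le_leq le_de Tx)).
- exact: (wdeg_le_comp2 w0 wK2 (wdeg_le_leq le_de Ty)).
- exact: (wdeg_le_comp2 w0 w0 (h00 T)).
Qed.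

End DoubleSumPolynomial.

Section DoubleSum.
Variable R : realType.
Local Notation C := R[i].
Local Notation P2 := {mpoly C[2]}.
Implicit Types (p r X A : P2) (x y : C).

Lemma double_sum_polynomial A d e :
  bideg_le A d d -> wdeg_le (w2 1 1) (antidiff2 (Top A)) e ->
  exists P : {mpoly C[3]}, degvar_le P k2v (maxn e d.+1) /\
    forall k1 k2 k3 : int,
      isum k1 k2 (fun l1 => isum k2 k3 (fun l2 => ev2 A l1%:~R l2%:~R))
      - ev2 A k2%:~R k2%:~R = ev3 P k1%:~R k2%:~R k3%:~R.
Proof.
move=> [Ax Ay] hB; set F := antidiff2 A.
have hF : bideg_le F d.+1 d.+1.
  split; [have := wdeg_le_antidiff2 Ax | have := wdeg_le_antidiff2 Ay].
    by rewrite addn0 addn1.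
  by rewrite addn0 addn1.
exists (double_sum_poly F (Top F) (antidiff2 (Top A))); split.
  exact: degvar_double_sum_poly hF (bideg_le_Top hF) hB.
move=> k1 k2 k3; rewrite ev3_double_sum_poly.
apply: isum2_corner (diff12_antidiff2 A) (corner_Top F) _ (antidiff2_x0 _) (antidiff2_0y _).
by move=> x y; rewrite [RHS]diff12_antidiff2; apply: diff12_Top => a b; apply: diff12_antidiff2.
Qed.

End DoubleSum.

Theorem lemma2 (R : realType) (Rdeg : nat) (A : {mpoly R[i][2]}) :
  degvar_le A (v1) Rdeg -> degvar_le A (v2) Rdeg ->
  totdeg_le (Top A) Rdeg ->
  (exists P : {mpoly R[i][3]},
     degvar_le P (inord 1) Rdeg.+2 /\
     forall k1 k2 k3 : int,
       isum k1 k2 (fun l1 => isum k2 k3 (fun l2 =>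
              ev2 A l1%:~R l2%:~R))
       - ev2 A k2%:~R k2%:~R
       = ev3 P k1%:~R k2%:~R k3%:~R) /\
  (Top A = 0 ->
   exists P : {mpoly R[i][3]},
     degvar_le P (inord 1) Rdeg.+1 /\
     forall k1 k2 k3 : int,
       isum k1 k2 (fun l1 => isum k2 k3 (fun l2 =>
              ev2 A l1%:~R l2%:~R))
       - ev2 A k2%:~R k2%:~R
       = ev3 P k1%:~R k2%:~R k3%:~R).
Proof.
move=> Ax Ay /totdeg_wdeg hT; have hA := bideg_le_degvar Ax Ay.
split.
  have hB : wdeg_le (w2 1 1) (antidiff2 (Top A)) Rdeg.+2.
    by have := wdeg_le_antidiff2 hT; rewrite !addn1.
  by rewrite -(maxn_idPl (leqnSn Rdeg.+1)); apply: double_sum_polynomial hA hB.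
move=> TA0; have hB : wdeg_le (w2 1 1) (antidiff2 (Top A)) 0.
  by rewrite TA0 antidiff20; apply: wdeg_le0.
by rewrite -(max0n Rdeg.+1); apply: double_sum_polynomial hA hB.
Qed.
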